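(* Let $n \geq 2$ and let $\sigma = (F_1, \ldots, F_n)$ be a sequence of sets of clauses. Run the following procedure on input $F_1, \ldots, F_n$: 1. Set $V_1 \leftarrow F_1 \setminus F_2$ and $C_1 \leftarrow F_1 \setminus V_1$. 2. For $i = 2, \ldots, n-1$ (in increasing order): (a) set $V_i \leftarrow F_i \setminus F_{i+1}$; (b) set $C_i \leftarrow (F_i \setminus F_{i-1}) \setminus V_i$; (c) for each clause $c \in V_i \cap F_{i-1}$: for $j = 1, \ldots, i-1$ (in increasing order), if $c \in C_j$, then set $C_j \leftarrow C_j \setminus \{c\}$, set $V_k \leftarrow V_k \cup \{c\}$ for every $k$ with $j \leq k \leq i-1$, and stop the loop over $j$ (proceed to the next clause $c$). 3. Set $C_n \leftarrow F_n \setminus F_{n-1}$ and $V_n \leftarrow \emptyset$. Then the procedure terminates, and on termination, for every $i$ with $1 \leq i \leq n$, the set $C_i$ is exactly the set of clauses that are cumulative in $F_i$ with respect to $\sigma$, and the set $V_i$ is exactly the set of clauses that are volatile in $F_i$ with respect to $\sigma$.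
   Context: A clause is a finite set (disjunction) of literals; only set membership of clauses matters here, so clauses may be treated as abstract elements. Given a sequence $\sigma = (F_1, \ldots, F_n)$ of sets of clauses and an index $1 \le i \le n$: - A clause $c$ is volatile in $F_i$ (with respect to $\sigma$) if $c \in F_i$ and there exists $j$ with $i < j \leq n$ such that $c \notin F_j$ (i.e., $c$ is removed at some later point). - A clause $c$ is cumulative in $F_i$ (with respect to $\sigma$) if $c \in F_i$, $c$ appears in $F_i$ for the first time in the sense that either $i = 1$ or $c \notin F_{i-1}$, and $c \in F_j$ for every $j$ with $i < j \leq n$ (i.e., $c$ is never removed afterwards). *)

From HB Require Import structures.
From mathcomp Require Import all_boot all_order.
From mathcomp Require Export finmap.
Set Implicit Arguments. Unset Strict Implicit. Unset Printing Implicit Defensive.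
Local Open Scope fset_scope.

(* Clauses are abstract elements of a choiceType T.  A sequence
   sigma = (F_1,...,F_n) is a function F : nat -> {fset T}; only the
   values at indices 1..n are relevant. *)

Section Defs.
Variable T : choiceType.
Implicit Types (F C V : nat -> {fset T}) (c : T).

Definition volatile F (n i : nat) c : Prop :=
  c \in F i /\ exists j, (i < j <= n)%N /\ c \notin F j.

Definition cumulative F (n i : nat) c : Prop :=
  c \in F i /\ (i = 1%N \/ c \notin F i.-1) /\
  forall j, (i < j <= n)%N -> c \in F j.

Definition upd (X : nat -> {fset T}) (k : nat) (A : {fset T}) : nat -> {fset T} :=
  fun m => if m == k then A else X m.

(* step 2(c) for a fixed clause c at stage i: loop j over js = 1..i-1 *)
Fixpoint inner_loop (c : T) (i : nat) (js : seq nat)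
    (CV : (nat -> {fset T}) * (nat -> {fset T})) :=
  match js with
  | [::] => CV
  | j :: js' =>
      if c \in CV.1 j then
        (upd CV.1 j (CV.1 j `\ c),
         fun k => if (j <= k <= i.-1)%N then CV.2 k `|` [fset c] else CV.2 k)
      else inner_loop c i js' CV
  end.

Definition stage (F : nat -> {fset T}) (CV : (nat -> {fset T}) * (nat -> {fset T}))
    (i : nat) :=
  let V1 := upd CV.2 i (F i `\` F i.+1) in
  let C1 := upd CV.1 i ((F i `\` F i.-1) `\` V1 i) in
  foldl (fun cv c => inner_loop c i (iota 1 i.-1) cv)
        (C1, V1) (enum_fset (V1 i `&` F i.-1)).

Definition procedure (F : nat -> {fset T}) (n : nat) :=
  let V0 := upd (fun _ => fset0) 1 (F 1 `\` F 2) in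
  let C0 := upd (fun _ => fset0) 1 (F 1 `\` V0 1) in
  let CV := foldl (stage F) (C0, V0) (iota 2 (n - 2)) in
  (upd CV.1 n (F n `\` F n.-1), upd CV.2 n fset0).

End Defs.

From HB Require Import structures.
From mathcomp Require Import all_boot all_order finmap.
From mathcomp Require Import zify.
Set Implicit Arguments. Unset Strict Implicit. Unset Printing Implicit Defensive.
Local Open Scope fset_scope.

(* Before stage i, the sets at the indices j < i classify every clause with
   respect to the prefix (F_1, ..., F_i).  Appending F_(i+1) changes the
   classification at an index j < i only for the clauses c lying in F_(i-1) and
   F_i but not in F_(i+1): such a c stops being cumulative at the start s of its
   last run of memberships and becomes volatile at s, ..., i-1.  The start s is
   unique, and by the invariant C_s is the only earlier set containing c, so
   step 2(c) performs exactly this change. *)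

Section Procedure.
Variables (T : choiceType) (F : nat -> {fset T}).
Implicit Types (c d : T) (CV : (nat -> {fset T}) * (nat -> {fset T})).

Lemma cumulative_mem n i l c :
  cumulative F n i c -> (i <= l <= n)%N -> c \in F l.
Proof.
case=> ci [_ later] /andP[]; rewrite leq_eqVlt => /orP[/eqP <- //|il] ln.
by apply: later; rewrite il.
Qed.

Lemma cumulative_self n c :
  cumulative F n n c <-> c \in F n /\ (n = 1%N \/ c \notin F n.-1).
Proof. by split=> [[ci [first _]] | [ci first]] //; split=> //; split=> // j; lia. Qed.

Lemma volatile_self n c : ~ volatile F n n c.
Proof. by case=> _ [j]; lia. Qed.

Lemma cumulativeS n i c : (i <= n)%N ->
  cumulative F n.+1 i c <-> cumulative F n i c /\ c \in F n.+1.
Proof.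
move=> le_in; split.
  case=> ci [first later]; split; last by apply: later; lia.
  by split=> //; split=> // j hj; apply: later; lia.
case=> [[ci [first later]] cn]; split=> //; split=> // j hj.
by case: (eqVneq j n.+1) => [-> // | ne]; apply: later; lia.
Qed.

Lemma volatileS n i c : (i <= n)%N ->
  volatile F n.+1 i c <-> volatile F n i c \/ c \in F i /\ c \notin F n.+1.
Proof.
move=> le_in; split.
  case=> ci [j [hj cj]]; case: (eqVneq j n.+1) => [ej | ne].
    by right; rewrite -ej.
  by left; split=> //; exists j; split=> //; lia.
case=> [[ci [j [hj cj]]] | [ci cn]]; split=> //.
  by exists j; split=> //; lia.
by exists n.+1; split=> //; lia.
Qed.

Lemma cumulative_exists t c : (0 < t)%N -> c \in F t ->
  exists2 s, (0 < s <= t)%N & cumulative F t s c.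
Proof.
elim: t => [// | t IH] _ ct.
have [t0 | t_gt0] := posnP t.
  by exists 1%N; rewrite ?t0 //; apply/cumulative_self; rewrite -t0; split; [|left].
have [ct' | nct'] := boolP (c \in F t).
  have [s hs cum] := IH t_gt0 ct'.
  by exists s; [lia | apply/cumulativeS; [lia | split]].
by exists t.+1; rewrite ?leqnn //; apply/cumulative_self; split; [|right].
Qed.

Lemma cumulative_unique n s j c : (0 < s <= n)%N -> (0 < j <= n)%N ->
  cumulative F n s c -> cumulative F n j c -> s = j.
Proof.
have earlier (a b : nat) : (0 < a < b)%N -> (b <= n)%N ->
    cumulative F n a c -> ~ cumulative F n b c.
  move=> hab hb cum [_ [[b1 | ncb] _]]; first lia.
  by rewrite (cumulative_mem cum) in ncb; lia.
move=> hs hj cs cj; case: (ltngtP s j) => [sj | js | //].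
  by case: (earlier s j) => //; lia.
by case: (earlier j s) => //; lia.
Qed.

Lemma volatile_before n s j c : (0 < j < s)%N -> (s <= n)%N ->
  cumulative F n s c -> c \in F j -> volatile F n j c.
Proof.
move=> hj hs [_ [[s1 | ncs] _]] cj; first lia.
split=> //; exists s.-1; split=> //.
by case: (eqVneq j s.-1) => [ej | ne]; [rewrite -ej cj in ncs | lia].
Qed.

Lemma classification_stable i j c : (0 < j < i)%N ->
  ~~ [&& c \in F i.-1, c \in F i & c \notin F i.+1] ->
  (cumulative F i.+1 j c <-> cumulative F i j c) /\
  (volatile F i.+1 j c <-> volatile F i j c).
Proof.
move=> hj hc; rewrite cumulativeS ?volatileS; try lia; split.
  split=> [[] // | cum]; split=> //.
  have ci' : c \in F i.-1 by apply: (cumulative_mem cum); lia.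
  have ci : c \in F i by apply: (cumulative_mem cum); lia.
  by move: hc; rewrite ci' ci negbK.
split=> [[// | [cj cn]] | ]; last by left.
split=> //; have [ci | nci] := boolP (c \in F i); last by exists i; split=> //; lia.
have nci' : c \notin F i.-1 by move: hc; rewrite ci (negbTE cn) andbT.
exists i.-1; split=> //.
by case: (eqVneq j i.-1) => [ej | ne]; [rewrite -ej cj in nci' | lia].
Qed.

Lemma classification_moved i s j c : (0 < j < i)%N -> (0 < s <= i)%N ->
  c \notin F i.+1 -> cumulative F i s c ->
  ~ cumulative F i.+1 j c /\
  (volatile F i.+1 j c <-> volatile F i j c \/ (s <= j)%N).
Proof.
move=> hj hs cn cum; rewrite cumulativeS ?volatileS; try lia.
split; first by rewrite (negbTE cn); case.
split=> [[v | [cj _]] | [v | sj]]; [by left | | by left | ].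
  case: (leqP s j) => [sj | js]; first by right.
  by left; apply: (volatile_before _ _ cum cj); lia.
by right; split=> //; apply: (cumulative_mem cum); lia.
Qed.

(* The loop for a clause d only moves d, so the procedure can be followed one
   clause at a time through this view. *)
Definition trace c CV (k : nat) := (c \in CV.1 k, c \in CV.2 k).

Lemma trace_inner_loop_neq d c i js CV :
  d != c -> trace c (inner_loop d i js CV) =1 trace c CV.
Proof.
move=> dc; have cd : (c == d) = false by rewrite eq_sym; exact: negbTE.
elim: js CV => [// | j js IH] CV /=; case: ifP => _; last exact: IH.
move=> k; rewrite /trace /upd /=; congr pair.
  by case: ifP => [/eqP -> |]; rewrite ?in_fsetD1 ?cd.
by case: ifP; rewrite ?in_fsetU ?in_fset1 ?cd ?orbF.
Qed.

Lemma eq_trace_inner_loop c i js CV CV' : trace c CV =1 trace c CV' ->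
  trace c (inner_loop c i js CV) =1 trace c (inner_loop c i js CV').
Proof.
elim: js CV CV' => [// | j js IH] CV CV' eqCV /=.
have /pair_equal_spec[-> _] := eqCV j; case: ifP => _; last exact: IH.
move=> k; have /pair_equal_spec[e1 e2] := eqCV k; rewrite /trace /upd /=.
congr pair; first by case: ifP; rewrite ?in_fsetD1 ?eqxx ?e1.
by case: ifP; rewrite ?in_fsetU e2.
Qed.

Lemma trace_foldl_inner_loop c i js (s : seq T) CV : uniq s ->
  trace c (foldl (fun cv d => inner_loop d i js cv) CV s) =1
  trace c (if c \in s then inner_loop c i js CV else CV).
Proof.
elim: s CV => [// | x s IH] CV /= /andP[xs us] k; rewrite IH // in_cons.
case: (eqVneq x c) => [exc | xc]; first by rewrite -exc (negbTE xs).
case: ifP => _; last exact: trace_inner_loop_neq.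
by apply: eq_trace_inner_loop; apply: trace_inner_loop_neq.
Qed.

Lemma inner_loop_at c i js CV s : s \in js ->
  {in js, forall j, (c \in CV.1 j) = (j == s)} ->
  inner_loop c i js CV = (upd CV.1 s (CV.1 s `\ c),
     fun k => if (s <= k <= i.-1)%N then CV.2 k `|` [fset c] else CV.2 k).
Proof.
elim: js => [// | j js IH] /= sjs memC.
rewrite memC ?mem_head //; case: (eqVneq j s) => [-> // | ne].
apply: IH => [| k kjs]; last by apply: memC; rewrite in_cons kjs orbT.
by move: sjs; rewrite in_cons eq_sym (negbTE ne).
Qed.

Definition classifies_at n j c CV :=
  (c \in CV.1 j <-> cumulative F n j c) /\ (c \in CV.2 j <-> volatile F n j c).

Definition classifies n m c CV := forall j, (0 < j <= m)%N -> classifies_at n j c CV.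

Lemma classifies_trace n m c CV CV' :
  trace c CV =1 trace c CV' -> classifies n m c CV' -> classifies n m c CV.
Proof.
move=> eqCV cl j /cl; rewrite /classifies_at.
by have /pair_equal_spec[-> ->] := eqCV j.
Qed.

Lemma classifies_inner_loop i c CV : (1 < i)%N ->
  c \in F i.-1 -> c \in F i -> c \notin F i.+1 ->
  classifies i i.-1 c CV -> classifies_at i.+1 i c CV ->
  classifies i.+1 i c (inner_loop c i (iota 1 i.-1) CV).
Proof.
move=> i_gt1 ci' ci cn cl cl_i.
have [s hs cum] := cumulative_exists (ltnW i_gt1) ci.
have s_lt_i : (s < i)%N.
  rewrite ltn_neqAle (andP hs).2 andbT; apply/eqP => es.
  by move: cum; rewrite es => -[_ [[i1 | nci'] _]]; [lia | rewrite ci' in nci'].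
have memC j : (0 < j <= i.-1)%N -> (c \in CV.1 j) = (j == s).
  move=> hj; apply/idP/eqP => [/(cl j hj).1 cj | ->].
    by apply/esym/(cumulative_unique _ _ cum cj); lia.
  by apply/(cl s _).1; first lia.
rewrite (@inner_loop_at _ _ _ _ s) => [j hj | |]; first last.
- by move=> j; rewrite mem_iota => hj; apply: memC; lia.
- by rewrite mem_iota; lia.
rewrite /classifies_at /upd /=.
case: (eqVneq j i) => [-> | ne].
  have -> : (i == s) = false by apply/eqP; lia.
  by have -> : (s <= i <= i.-1)%N = false by apply/negbTE/negP => /andP[_]; lia.
have [ncum vol] := classification_moved (i:=i) (j:=j) (ltac:(lia)) hs cn cum.
have [clC clV] := cl j ltac:(lia); split.
  case: ifP => [_ | ns]; first by rewrite in_fsetD1 eqxx.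
  by rewrite memC ?ns; [| lia].
rewrite vol; case: ifP => sj.
  by rewrite in_fsetU in_fset1 eqxx orbT; split=> // _; right; lia.
by rewrite clV; split=> [| [//|]]; [left | lia].
Qed.

Lemma stage_classifies i c CV : (1 < i)%N ->
  classifies i i.-1 c CV -> classifies i.+1 i c (stage F CV i).
Proof.
move=> i_gt1 cl.
set V1 := upd CV.2 i (F i `\` F i.+1).
set C1 := upd CV.1 i ((F i `\` F i.-1) `\` V1 i).
have -> : stage F CV i = foldl (fun cv d => inner_loop d i (iota 1 i.-1) cv)
    (C1, V1) (enum_fset (V1 i `&` F i.-1)) by [].
apply: classifies_trace (trace_foldl_inner_loop _ _ _ _ (fset_uniq _)) _.
have V1i : V1 i = F i `\` F i.+1 by rewrite /V1 /upd eqxx.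
have low : classifies i i.-1 c (C1, V1).
  move=> j hj; have ji : (j == i) = false by apply/eqP; lia.
  by rewrite /classifies_at /C1 /V1 /upd /= ji; apply: cl.
have top : classifies_at i.+1 i c (C1, V1).
  rewrite /classifies_at /C1 /upd /= eqxx V1i cumulativeS // cumulative_self.
  rewrite volatileS // !in_fsetD negb_and negbK; split.
    split=> [/and3P[/orP[cn | nci] nci' ci] | [[ci [i1 | nci']] cn]].
    - by split; [split; [|right] |].
    - by rewrite ci in nci.
    - lia.
    - by rewrite cn nci' ci.
  split=> [/andP[cn ci] | [/volatile_self [] | [ci cn]]]; first by right.
  by rewrite ci cn.
have -> : (c \in enum_fset (V1 i `&` F i.-1)) = (c \in V1 i `&` F i.-1) by [].
rewrite in_fsetI V1i in_fsetD; case: ifP => moved.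
  move: moved => /andP[/andP[cn ci] ci'].
  exact: classifies_inner_loop.
move=> j hj; case: (eqVneq j i) => [-> // | ne].
have stable : ~~ [&& c \in F i.-1, c \in F i & c \notin F i.+1].
  by apply/negP => /and3P[ci' ci cn]; rewrite cn ci ci' in moved.
have [stC stV] := classification_stable (i:=i) (j:=j) (ltac:(lia)) stable.
by rewrite /classifies_at stC stV; apply: low; lia.
Qed.

Lemma classifies_foldl_stage k m c CV : (0 < m)%N -> classifies m.+1 m c CV ->
  classifies (m + k).+1 (m + k) c (foldl (stage F) CV (iota m.+1 k)).
Proof.
elim: k m CV => [| k IH] m CV m_gt0 cl; first by rewrite addn0.
rewrite /= addnS -addSn; apply: IH => //; exact: stage_classifies.
Qed.

Lemma classifies_initial c :
  classifies 2 1 c (upd (fun _ => fset0) 1 (F 1 `\` upd (fun _ => fset0) 1 (F 1 `\` F 2) 1),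
                    upd (fun _ => fset0) 1 (F 1 `\` F 2)).
Proof.
move=> j hj; have -> : j = 1%N by lia.
rewrite /classifies_at /upd /= cumulativeS // cumulative_self volatileS //.
rewrite !in_fsetD negb_and negbK; split.
  split=> [/andP[/orP[c2 | nc1] c1] | [[c1 _] c2]]; last by rewrite c1 c2.
    by split; [split; [|left] |].
  by rewrite c1 in nc1.
split=> [/andP[c2 c1] | [/volatile_self [] | [c1 c2]]]; first by right.
by rewrite c1 c2.
Qed.

End Procedure.

Theorem mainTheorem1 (T : choiceType) (n : nat) (F : nat -> {fset T}) :
  (2 <= n)%N ->
  forall i : nat, (1 <= i <= n)%N ->
  forall c : T,
    (c \in (procedure F n).1 i <-> cumulative F n i c) /\
    (c \in (procedure F n).2 i <-> volatile F n i c).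
Proof.
move=> n_ge2 i hi c.
have := classifies_foldl_stage (k := n - 2) (ltn0Sn 0) (classifies_initial F c).
rewrite (_ : 1 + (n - 2) = n.-1)%N ?(ltn_predK n_ge2) => [cl|]; last by lia.
rewrite /procedure /upd /=; case: (eqVneq i n) => [-> | ne]; last by apply: cl; lia.
rewrite cumulative_self in_fsetD in_fset0; split; last by split=> // /volatile_self.
by split=> [/andP[nc cn] | [cn [n1 | ->]]]; [split; [|right] | lia | rewrite cn].
Qed.
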